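(* Let $q$ be a prime power, $\xi$ a generator of $\mathbb{F}_q^*$, and let $u=(\xi^a,\xi^b,\xi^c)$ and $v=(\xi^d,\xi^e,\xi^f)$ be elements of $\mathcal{D}_q$ (exponents in $\mathbb{Z}_{q-1}$). Let $M=\{\xi^{a-d},\xi^{b-e},\xi^{c-f}\}\subseteq\mathbb{F}_q^*$ (as a set, so repeated values are counted once). Then \[\rho_q(u,v)=\sum_{\mu\in M}|\widetilde{B}(u)\cap\widetilde{B}(\mu v)|.\]
   Context: $\mathbb{F}_q$ is the finite field with $q$ elements. Hamming distance $d(u,v)=|\{i:u_i\ne v_i\}|$ on $\mathbb{F}_q^3$; $B(u)=\{v:d(u,v)\le1\}$; $E(u)=\bigcup_{\lambda\in\mathbb{F}_q}B(\lambda u)$. $\mathcal{D}_q=\{(u_1,u_2,u_3)\in\mathbb{F}_q^3: u_1,u_2,u_3 \text{ pairwise distinct and nonzero}\}$, $\widetilde{B}(u)=B(u)\cap\mathcal{D}_q$, $\widetilde{E}(u)=E(u)\cap\mathcal{D}_q$. For $u,v\in\mathbb{F}_q^3$, $\rho_q(u,v)=0$ if $|\widetilde{E}(u)|=0$ or $|\widetilde{E}(v)|=0$, and otherwise $\rho_q(u,v)=\sum_{\mu\in\mathbb{F}_q^*}|\widetilde{B}(u)\cap\widetilde{B}(\mu v)|$. *)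

From mathcomp Require Import all_boot all_order all_algebra.
Set Implicit Arguments. Unset Strict Implicit. Unset Printing Implicit Defensive.
Import GRing.Theory.
Local Open Scope ring_scope.

Section Defs.
Variable F : finFieldType.

Definition vec3 := {ffun 'I_3 -> F}.

Definition mk3 (x y z : F) : vec3 := [ffun i : 'I_3 => nth 0 [:: x; y; z] i].

Definition hamming (u v : vec3) : nat := #|[set i : 'I_3 | u i != v i]|.

Definition ball (u : vec3) : {set vec3} := [set w | (hamming u w <= 1)%N].

Definition scale3 (l : F) (u : vec3) : vec3 := [ffun i => l * u i].

Definition Eset (u : vec3) : {set vec3} := \bigcup_(l : F) ball (scale3 l u).

Definition Dq : {set vec3} :=
  [set w : vec3 | [forall i, w i != 0] &&
                  [forall i, forall j, (i != j) ==> (w i != w j)]].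

Definition Bt (u : vec3) : {set vec3} := ball u :&: Dq.
Definition Et (u : vec3) : {set vec3} := Eset u :&: Dq.

Definition rho (u v : vec3) : nat :=
  if (#|Et u| == 0%N) || (#|Et v| == 0%N) then 0%N
  else (\sum_(mu in [set x : F | x != 0%R]) #|Bt u :&: Bt (scale3 mu v)|)%N.

End Defs.

From mathcomp Require Import all_boot all_order all_algebra.
Import GRing.Theory.
Local Open Scope ring_scope.

(* A word at distance at most 1 from both [u] and [mu v] agrees with each of
   them in at least two of the three coordinates, hence [u i = mu * v i] for
   some [i], i.e. [mu] is one of the ratios [u i / v i].  All other scalars
   contribute nothing to [rho u v]; when [u = xi^(a,b,c)] and [v = xi^(d,e,f)]
   these ratios are exactly [xi^(a-d), xi^(b-e), xi^(c-f)]. *)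

Section RhoSupport.
Variable F : finFieldType.
Implicit Types (u v w : vec3 F) (mu : F).

Lemma hammingxx w : hamming w w = 0%N.
Proof. by apply/eqP; rewrite cards_eq0; apply/eqP/setP=> i; rewrite !inE eqxx. Qed.

Lemma scale31 w : scale3 1 w = w.
Proof. by apply/ffunP=> i; rewrite ffunE mul1r. Qed.

Lemma Et_card_gt0 w : w \in Dq F -> (0 < #|Et w|)%N.
Proof.
move=> wD; apply/card_gt0P; exists w; rewrite inE wD andbT.
by apply/bigcupP; exists 1 => //; rewrite scale31 inE hammingxx.
Qed.

Lemma rho_Dq u v : u \in Dq F -> v \in Dq F ->
  rho u v = (\sum_(mu in [set x : F | x != 0%R]) #|Bt u :&: Bt (scale3 mu v)|)%N.
Proof.
by move=> /Et_card_gt0 uD /Et_card_gt0 vD; rewrite /rho !eqn0Ngt uD vD.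
Qed.

Lemma Bt_scale_disjoint u v mu :
  (forall i, u i != mu * v i) -> Bt u :&: Bt (scale3 mu v) = set0.
Proof.
move=> uNv; apply/setP=> w; rewrite !inE; apply/negP.
move=> /and3P [/and3P [uw _ _] vw _]; rewrite /hamming in uw vw.
have cover : [set: 'I_3] \subset
    [set i | u i != w i] :|: [set i | scale3 mu v i != w i].
  apply/subsetP=> i _; rewrite !inE ffunE.
  by case: (eqVneq (u i) (w i)) => //= <-; rewrite eq_sym uNv.
have := leq_trans (subset_leq_card cover) (leq_card_setU _ _).
by rewrite cardsT card_ord => /leq_trans /(_ (leq_add uw vw)).
Qed.

Lemma rho_ratio_support u v (M : {set F}) :
  u \in Dq F -> v \in Dq F -> M \subset [set x : F | x != 0%R] ->
  (forall i, u i / v i \in M) ->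
  rho u v = (\sum_(mu in M) #|Bt u :&: Bt (scale3 mu v)|)%N.
Proof.
move=> uD vD M0 Mratio; rewrite rho_Dq //.
rewrite (big_setID M) /= (setIidPr M0) [X in (_ + X)%N]big1 ?addn0 //.
move=> mu; rewrite !inE => /andP [muNM _].
apply/eqP; rewrite cards_eq0; apply/eqP/Bt_scale_disjoint=> i.
apply: contra muNM => /eqP ui.
have vi0 : v i != 0 by move: vD; rewrite inE => /andP [/forallP].
by rewrite -[mu](mulfK vi0) -ui.
Qed.

End RhoSupport.

Lemma mk3_Dq_neq0 {F : finFieldType} {x y z : F} :
  mk3 x y z \in Dq F -> [/\ x != 0, y != 0 & x != y].
Proof.
rewrite inE => /andP [/forallP w0 /forallP wD].
have := w0 ord0; have := w0 (lift ord0 ord0).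
have /forallP/(_ (lift ord0 ord0)) := wD ord0.
by rewrite !ffunE.
Qed.

Theorem lemma13 (F : finFieldType) (xi : F)
  (hxi : forall x : F, x != 0 -> exists k : nat, x = xi ^+ k)
  (a b c d e f : nat) :
  mk3 (xi ^+ a) (xi ^+ b) (xi ^+ c) \in Dq F ->
  mk3 (xi ^+ d) (xi ^+ e) (xi ^+ f) \in Dq F ->
  rho (mk3 (xi ^+ a) (xi ^+ b) (xi ^+ c)) (mk3 (xi ^+ d) (xi ^+ e) (xi ^+ f)) =
  (\sum_(mu in [set (xi ^ (a%:Z - d%:Z))%R; (xi ^ (b%:Z - e%:Z))%R; (xi ^ (c%:Z - f%:Z))%R])
     #|Bt (mk3 (xi ^+ a) (xi ^+ b) (xi ^+ c)) :&:
       Bt (scale3 mu (mk3 (xi ^+ d) (xi ^+ e) (xi ^+ f)))|)%N.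
Proof.
move=> uD vD.
have xi0 : xi != 0.
  have [xa0 xb0 xab] := mk3_Dq_neq0 uD; apply: contra xab => /eqP xi0.
  by move: xa0 xb0; rewrite xi0 !expr0n; do 2!case: (_ == 0%N); rewrite ?eqxx.
have ratioE m n : xi ^ (m%:Z - n%:Z) = xi ^+ m / xi ^+ n.
  by rewrite expfzDr // -exprnN.
apply: rho_ratio_support => //.
- apply/subsetP=> x; rewrite !inE => /orP [/orP [] | ] /eqP ->;
  by rewrite expfz_neq0.
- by rewrite !ratioE => -[[|[|[|//]]] ?]; rewrite !ffunE !inE /= eqxx ?orbT.
Qed.
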